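(* Let $n\ge 1$ and $k\ge 2$ be integers and let $R\in(0,k]$. Suppose $\mathcal A$ is a (possibly randomized and adaptive) algorithm that makes $s$ queries, each a vector $\mathbf x\in\{-k,\dots,k\}^n$ answered by $\|\mathbf x-\mathbf y\|_\infty$, and that for every $\mathbf y\in\{-k,\dots,k\}^n$ outputs $\mathbf y'\in\{-k,\dots,k\}^n$ with $\|\mathbf y'-\mathbf y\|_\infty\le R$ with probability at least $2/3$ over its random coins. Then $s=\Omega\!\left(\frac{n\log(k/R)}{\log k}\right)$. In particular, if $R\le k^{1-\varepsilon}$ for a constant $\varepsilon>0$, then $s=\Omega(n)$.
   Context: $\|\mathbf z\|_\infty=\max_i|z_i|$. ''Adaptive'' means each query may depend on answers to previous queries. Constants in $\Omega(\cdot)$ may depend on $\varepsilon$. *)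

From Stdlib Require Export Reals ZArith List.
Open Scope R_scope.

(* A vector in Z^n is represented as a function nat -> Z; only coordinates
   0..n-1 are meaningful. *)
Definition vec := nat -> Z.

Definition in_box (n k : nat) (x : vec) : Prop :=
  forall i : nat, (i < n)%nat -> (- Z.of_nat k <= x i <= Z.of_nat k)%Z.

Fixpoint linf (n : nat) (x y : vec) : Z :=
  match n with
  | O => 0%Z
  | S m => Z.max (Z.abs (x m - y m)) (linf m x y)
  end.

(* A deterministic adaptive query algorithm: the next query is a function of
   the list of answers received so far; the output is a function of the full
   list of answers. *)
Record DetAlg := mkDetAlg {
  query  : list Z -> vec;
  output : list Z -> vec
}.

Definition valid_alg (n k : nat) (A : DetAlg) : Prop :=
  forall h : list Z, in_box n k (query A h) /\ in_box n k (output A h).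

Fixpoint history (n : nat) (A : DetAlg) (y : vec) (t : nat) : list Z :=
  match t with
  | O => nil
  | S t' => let h := history n A y t' in h ++ (linf n (query A h) y :: nil)
  end.

Definition run (n s : nat) (A : DetAlg) (y : vec) : vec :=
  output A (history n A y s).

(* A randomized algorithm = probability distribution over deterministic
   algorithms (finite support; list of (probability, algorithm)). *)
Definition RandAlg := list (R * DetAlg).

Definition is_distribution (P : RandAlg) : Prop :=
  Forall (fun p => 0 <= fst p) P /\ fold_right (fun p acc => fst p + acc) 0 P = 1.

Definition success_prob (n s : nat) (Rad : nat) (P : RandAlg) (y : vec) : R :=
  fold_right
    (fun p acc =>
       (if Z.leb (linf n (run n s (snd p) y) y) (Z.of_nat Rad) then fst p else 0)
       + acc) 0 P.

Definition good_alg (n k s Rad : nat) (P : RandAlg) : Prop :=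
  is_distribution P /\
  Forall (fun p => valid_alg n k (snd p)) P /\
  (forall y : vec, in_box n k y -> success_prob n s Rad P y >= 2/3).

From Stdlib Require Import Reals ZArith List Lia Lra Psatz.
Import ListNotations.
Open Scope R_scope.

(* A deterministic algorithm's output is a function of its list of answers, and after s
   queries this list takes at most (2k+1)^s values; each output lies within distance R of at
   most (2R+1)^n points of the box. Averaging the success probability over the (2k+1)^n
   points of the box therefore gives (2/3)(2k+1)^n <= (2k+1)^s (2R+1)^n, and taking
   logarithms gives s >= n ln(k/R) / (8 ln k). With no query at all, the output is the same
   for the two corners (k,...,k) and (-k,...,-k), which forces R >= k. *)

Fixpoint sumR {A : Type} (f : A -> R) (l : list A) : R :=
  match l with [] => 0 | a :: l' => f a + sumR f l' end.

Lemma sumR_app {A} (f : A -> R) l1 l2 : sumR f (l1 ++ l2) = sumR f l1 + sumR f l2.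
Proof. induction l1 as [|a l1 IH]; simpl; [ring | rewrite IH; ring]. Qed.

Lemma sumR_map {A B} (f : B -> R) (g : A -> B) l : sumR f (map g l) = sumR (fun a => f (g a)) l.
Proof. induction l as [|a l IH]; simpl; [easy | now rewrite IH]. Qed.

Lemma sumR_flat_map {A B} (f : B -> R) (g : A -> list B) l :
  sumR f (flat_map g l) = sumR (fun a => sumR f (g a)) l.
Proof. induction l as [|a l IH]; simpl; [easy | now rewrite sumR_app, IH]. Qed.

Lemma sumR_le {A} (f g : A -> R) l : (forall a, In a l -> f a <= g a) -> sumR f l <= sumR g l.
Proof.
  induction l as [|a l IH]; simpl; intros Hfg; [lra|].
  enough (sumR f l <= sumR g l) by (specialize (Hfg a (or_introl eq_refl)); lra).
  apply IH; auto.
Qed.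

Lemma sumR_ext {A} (f g : A -> R) l : (forall a, In a l -> f a = g a) -> sumR f l = sumR g l.
Proof. intros Hfg; apply Rle_antisym; apply sumR_le; intros a Ha; rewrite Hfg; auto; lra. Qed.

Lemma sumR_const {A} (c : R) (l : list A) : sumR (fun _ => c) l = c * INR (length l).
Proof.
  induction l as [|a l IH]; simpl sumR; [simpl; ring|].
  rewrite IH, length_cons, S_INR. ring.
Qed.

Lemma sumR_ge0 {A} (f : A -> R) l : (forall a, In a l -> 0 <= f a) -> 0 <= sumR f l.
Proof.
  intros Hf. replace 0 with (sumR (fun _ : A => 0) l) at 1 by (rewrite sumR_const; ring).
  now apply sumR_le.
Qed.

Lemma sumR_In_le {A} (f : A -> R) l a :
  (forall b, In b l -> 0 <= f b) -> In a l -> f a <= sumR f l.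
Proof.
  induction l as [|b l IH]; simpl; intros Hf Ha; [contradiction|].
  destruct Ha as [<- | Ha].
  - enough (0 <= sumR f l) by lra. apply sumR_ge0; auto.
  - enough (f a <= sumR f l) by (specialize (Hf b (or_introl eq_refl)); lra). apply IH; auto.
Qed.

Lemma sumR_plus {A} (f g : A -> R) l : sumR (fun a => f a + g a) l = sumR f l + sumR g l.
Proof. induction l as [|a l IH]; simpl; [ring | rewrite IH; ring]. Qed.

Lemma sumR_scal_l {A} (c : R) (f : A -> R) l : sumR (fun a => c * f a) l = c * sumR f l.
Proof. induction l as [|a l IH]; simpl; [ring | rewrite IH; ring]. Qed.

Lemma sumR_scal_r {A} (c : R) (f : A -> R) l : sumR (fun a => f a * c) l = sumR f l * c.
Proof. induction l as [|a l IH]; simpl; [ring | rewrite IH; ring]. Qed.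

Lemma sumR_swap {A B} (f : A -> B -> R) la lb :
  sumR (fun a => sumR (f a) lb) la = sumR (fun b => sumR (fun a => f a b) la) lb.
Proof.
  induction la as [|a la IH]; simpl.
  - induction lb as [|b lb IHb]; simpl; [easy | rewrite <- IHb; ring].
  - rewrite IH, <- sumR_plus. reflexivity.
Qed.

Definition indicator (b : bool) : R := if b then 1 else 0.

Lemma indicator_bounds b : 0 <= indicator b <= 1.
Proof. destruct b; simpl; lra. Qed.

Lemma indicator_Zmax_le x y r :
  indicator (Z.max x y <=? r)%Z = indicator (x <=? r)%Z * indicator (y <=? r)%Z.
Proof.
  unfold indicator.
  destruct (Z.leb_spec (Z.max x y) r), (Z.leb_spec x r), (Z.leb_spec y r); lia || ring.
Qed.

Fixpoint zrange (lo : Z) (len : nat) : list Z :=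
  match len with O => [] | S len' => lo :: zrange (lo + 1) len' end.

Lemma length_zrange lo len : length (zrange lo len) = len.
Proof. revert lo; induction len; intros lo; simpl; auto. Qed.

Lemma In_zrange lo len z : In z (zrange lo len) <-> (lo <= z < lo + Z.of_nat len)%Z.
Proof.
  revert lo; induction len as [|len IH]; intros lo; simpl; [lia|].
  rewrite IH. lia.
Qed.

Lemma zrange_ball_count (a : Z) (r : nat) lo len :
  sumR (fun z => indicator (Z.abs (a - z) <=? Z.of_nat r)%Z) (zrange lo len) <= 2 * INR r + 1.
Proof.
  (* The points counted lie in the integer interval [max lo (a - r), a + r]. *)
  enough (Hmax : forall lo,
            sumR (fun z => indicator (Z.abs (a - z) <=? Z.of_nat r)%Z) (zrange lo len)
            <= IZR (Z.max 0 (a + Z.of_nat r + 1 - Z.max lo (a - Z.of_nat r)))).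
  { eapply Rle_trans; [apply Hmax|]. rewrite INR_IZR_INZ.
    replace (2 * IZR (Z.of_nat r) + 1) with (IZR (2 * Z.of_nat r + 1))
      by (rewrite plus_IZR, mult_IZR; reflexivity).
    apply IZR_le. lia. }
  induction len as [|len IH]; intros lo'; simpl; [apply IZR_le; lia|].
  specialize (IH (lo' + 1)%Z). unfold indicator at 1.
  destruct (Z.leb_spec (Z.abs (a - lo')) (Z.of_nat r)) as [Hin|Hout].
  - assert (Hstep : (1 + Z.max 0 (a + Z.of_nat r + 1 - Z.max (lo' + 1) (a - Z.of_nat r))
                     <= Z.max 0 (a + Z.of_nat r + 1 - Z.max lo' (a - Z.of_nat r)))%Z) by lia.
    apply IZR_le in Hstep. rewrite plus_IZR in Hstep. lra.
  - assert (Hstep : (Z.max 0 (a + Z.of_nat r + 1 - Z.max (lo' + 1) (a - Z.of_nat r))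
                     <= Z.max 0 (a + Z.of_nat r + 1 - Z.max lo' (a - Z.of_nat r)))%Z) by lia.
    apply IZR_le in Hstep. lra.
Qed.

(* New coordinates are appended at the end, matching the recursion of [linf] on the last one. *)
Fixpoint grid {A : Type} (m : list A) (n : nat) : list (list A) :=
  match n with
  | O => [[]]
  | S n' => flat_map (fun l => map (fun z => l ++ [z]) m) (grid m n')
  end.

Lemma length_grid {A} (m : list A) n : length (grid m n) = (length m ^ n)%nat.
Proof.
  induction n as [|n IH]; simpl; auto. rewrite <- IH. clear IH.
  induction (grid m n) as [|l L IHL]; simpl; auto.
  rewrite length_app, length_map, IHL. lia.
Qed.

Lemma In_grid {A} (m : list A) n l : In l (grid m n) -> length l = n /\ incl l m.
Proof.
  revert l; induction n as [|n IH]; intros l Hl; simpl in Hl.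
  - destruct Hl as [<-|[]]. split; [reflexivity | apply incl_nil_l].
  - apply in_flat_map in Hl as [l0 [Hl0 Hz]]. apply in_map_iff in Hz as [z [<- Hz]].
    destruct (IH l0 Hl0) as [Hlen Hincl]. split.
    + rewrite length_app, Hlen; simpl; lia.
    + apply incl_app; [assumption|]. now apply incl_cons.
Qed.

Lemma In_grid_snoc {A} (m : list A) n l z :
  In l (grid m n) -> In z m -> In (l ++ [z]) (grid m (S n)).
Proof.
  intros Hl Hz. simpl. apply in_flat_map. exists l. split; [easy|].
  exact (in_map (fun z0 => l ++ [z0]) m z Hz).
Qed.

Definition vec_of (l : list Z) : vec := fun i => nth i l 0%Z.

Lemma linf_ge0 n x y : (0 <= linf n x y)%Z.
Proof. induction n; simpl; lia. Qed.

Lemma linf_ext n x x' y y' :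
  (forall i, (i < n)%nat -> x i = x' i /\ y i = y' i) -> linf n x y = linf n x' y'.
Proof.
  induction n as [|n IH]; intros Hxy; simpl; auto.
  destruct (Hxy n (Nat.lt_succ_diag_r n)) as [-> ->].
  f_equal. apply IH. intros i Hi; apply Hxy; lia.
Qed.

Lemma linf_coord n x y i : (i < n)%nat -> (Z.abs (x i - y i) <= linf n x y)%Z.
Proof.
  induction n as [|n IH]; intros Hi; simpl; [lia|].
  destruct (Nat.eq_dec i n) as [->|Hne]; [lia|].
  specialize (IH ltac:(lia)). lia.
Qed.

Lemma linf_in_box_le n k x y : in_box n k x -> in_box n k y -> (linf n x y <= 2 * Z.of_nat k)%Z.
Proof.
  induction n as [|n IH]; intros Hx Hy; cbn [linf]; [lia|].
  assert (Hrec : (linf n x y <= 2 * Z.of_nat k)%Z)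
    by (apply IH; intros i Hi; [apply Hx | apply Hy]; lia).
  specialize (Hx n (Nat.lt_succ_diag_r n)). specialize (Hy n (Nat.lt_succ_diag_r n)). lia.
Qed.

Lemma linf_snoc n c l z : length l = n ->
  linf (S n) c (vec_of (l ++ [z])) = Z.max (Z.abs (c n - z)) (linf n c (vec_of l)).
Proof.
  intros Hlen. simpl. f_equal.
  - unfold vec_of. rewrite app_nth2 by lia. now rewrite Hlen, Nat.sub_diag.
  - apply linf_ext. intros i Hi. split; [reflexivity|]. unfold vec_of. now rewrite app_nth1 by lia.
Qed.

Definition close (n r : nat) (x y : vec) : bool := (linf n x y <=? Z.of_nat r)%Z.

Lemma grid_ball_count (m : list Z) (n r : nat) (c : vec) (b : R) :
  (forall a, sumR (fun z => indicator (Z.abs (a - z) <=? Z.of_nat r)%Z) m <= b) ->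
  sumR (fun l => indicator (close n r c (vec_of l))) (grid m n) <= b ^ n.
Proof.
  intros Hm.
  assert (Hb : 0 <= b).
  { eapply Rle_trans; [|apply (Hm 0%Z)]. apply sumR_ge0; intros; apply indicator_bounds. }
  induction n as [|n IH]; cbn [grid sumR pow].
  - unfold close, indicator. cbn [linf]. rewrite (proj2 (Z.leb_le _ _)) by lia. lra.
  - rewrite sumR_flat_map.
    apply Rle_trans with (sumR (fun l => indicator (close n r c (vec_of l)) * b) (grid m n)).
    + apply sumR_le. intros l Hl. rewrite sumR_map.
      destruct (In_grid m n l Hl) as [Hlen _].
      rewrite (sumR_ext _ (fun z => indicator (Z.abs (c n - z) <=? Z.of_nat r)%Z
                                    * indicator (close n r c (vec_of l))))
        by (intros z _; unfold close; rewrite linf_snoc by exact Hlen; apply indicator_Zmax_le).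
      rewrite sumR_scal_r, Rmult_comm.
      apply Rmult_le_compat_l; [apply indicator_bounds | apply Hm].
    + rewrite sumR_scal_r, Rmult_comm. apply Rmult_le_compat_l; assumption.
Qed.

Definition box_points (k n : nat) : list (list Z) := grid (zrange (- Z.of_nat k) (2 * k + 1)) n.

Definition answer_lists (k s : nat) : list (list Z) := grid (zrange 0 (2 * k + 1)) s.

Lemma INR_length_grid_zrange lo k n :
  INR (length (grid (zrange lo (2 * k + 1)) n)) = (2 * INR k + 1) ^ n.
Proof. rewrite length_grid, length_zrange, pow_INR, plus_INR, mult_INR. reflexivity. Qed.

Lemma box_points_in_box k n l : In l (box_points k n) -> in_box n k (vec_of l).
Proof.
  intros Hl i Hi. apply In_grid in Hl as [Hlen Hincl].
  assert (Hz : In (vec_of l i) (zrange (- Z.of_nat k) (2 * k + 1))).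
  { apply Hincl, nth_In. lia. }
  apply In_zrange in Hz. lia.
Qed.

Lemma history_in_answer_lists n k A y t :
  valid_alg n k A -> in_box n k y -> In (history n A y t) (answer_lists k t).
Proof.
  intros HA Hy. induction t as [|t IH]; simpl; [now left|].
  apply In_grid_snoc; [exact IH|]. apply In_zrange.
  pose proof (linf_ge0 n (query A (history n A y t)) y).
  pose proof (linf_in_box_le n k _ y (proj1 (HA (history n A y t))) Hy). lia.
Qed.

Lemma det_success_count n k s r A : valid_alg n k A ->
  sumR (fun l => indicator (close n r (run n s A (vec_of l)) (vec_of l))) (box_points k n)
  <= (2 * INR k + 1) ^ s * (2 * INR r + 1) ^ n.
Proof.
  intros HA.
  apply Rle_trans with (sumR (fun l => sumR (fun h => indicator (close n r (output A h) (vec_of l)))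
                                           (answer_lists k s)) (box_points k n)).
  { apply sumR_le. intros l Hl. unfold run.
    apply (sumR_In_le (fun h => indicator (close n r (output A h) (vec_of l)))).
    - intros; apply indicator_bounds.
    - apply history_in_answer_lists; [exact HA | now apply box_points_in_box]. }
  rewrite sumR_swap.
  apply Rle_trans with (sumR (fun _ => (2 * INR r + 1) ^ n) (answer_lists k s)).
  - apply sumR_le. intros h _. apply grid_ball_count. intros a. apply zrange_ball_count.
  - rewrite sumR_const. unfold answer_lists. rewrite INR_length_grid_zrange. lra.
Qed.

Lemma sumR_mixture_le {A B} (P : list (R * A)) (ys : list B) (g : A -> B -> R) (M : R) :
  Forall (fun p => 0 <= fst p) P -> sumR fst P = 1 ->
  (forall p, In p P -> sumR (g (snd p)) ys <= M) ->
  sumR (fun y => sumR (fun p => fst p * g (snd p) y) P) ys <= M.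
Proof.
  intros Hpos Hsum Hg. rewrite Forall_forall in Hpos.
  rewrite sumR_swap.
  apply Rle_trans with (sumR (fun p => fst p * M) P).
  - apply sumR_le. intros p Hp. rewrite sumR_scal_l.
    apply Rmult_le_compat_l; [apply Hpos | apply Hg]; assumption.
  - rewrite sumR_scal_r, Hsum. lra.
Qed.

Lemma success_prob_sumR n s r P y : success_prob n s r P y =
  sumR (fun p => fst p * indicator (close n r (run n s (snd p) y) y)) P.
Proof.
  induction P as [|p P IH]; simpl; [reflexivity|].
  rewrite IH. unfold indicator, close. destruct (_ <=? _)%Z; ring.
Qed.

Lemma is_distribution_sumR (P : RandAlg) :
  is_distribution P -> Forall (fun p => 0 <= fst p) P /\ sumR fst P = 1.
Proof.
  intros [Hpos Hsum]. split; [exact Hpos|]. rewrite <- Hsum. clear.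
  induction P as [|p P IH]; simpl; [reflexivity | now rewrite IH].
Qed.

Lemma good_alg_volume n k s r P : good_alg n k s r P ->
  2 / 3 * (2 * INR k + 1) ^ n <= (2 * INR k + 1) ^ s * (2 * INR r + 1) ^ n.
Proof.
  intros [Hdist [Hvalid Hsucc]]. apply is_distribution_sumR in Hdist as [Hpos Hsum].
  rewrite Forall_forall in Hvalid.
  apply Rle_trans with (sumR (fun l => success_prob n s r P (vec_of l)) (box_points k n)).
  - unfold box_points. rewrite <- INR_length_grid_zrange with (lo := (- Z.of_nat k)%Z).
    rewrite <- sumR_const. apply sumR_le. intros l Hl.
    apply Rge_le, Hsucc, box_points_in_box, Hl.
  - rewrite (sumR_ext _ _ _ (fun l _ => success_prob_sumR n s r P (vec_of l))).
    apply sumR_mixture_le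
      with (g := fun A l => indicator (close n r (run n s A (vec_of l)) (vec_of l)));
      [exact Hpos | exact Hsum |].
    intros p Hp. apply det_success_count, Hvalid, Hp.
Qed.

Lemma ln_le x y : 0 < x -> x <= y -> ln x <= ln y.
Proof. intros Hx [Hlt | ->]; [left; now apply ln_increasing | lra]. Qed.

Lemma ln_div x y : 0 < x -> 0 < y -> ln (x / y) = ln x - ln y.
Proof. intros Hx Hy. unfold Rdiv. rewrite ln_mult, ln_Rinv; auto with real. Qed.

Lemma ln_div_le_ln_odd_ratio K Q : 1 <= Q <= K ->
  ln (K / Q) <= 2 * ln ((2 * K + 1) / (2 * Q + 1)).
Proof.
  intros HQK.
  rewrite <- ln_pow with (n := 2%nat) by (apply Rdiv_lt_0_compat; lra). simpl INR.
  apply ln_le; [apply Rdiv_lt_0_compat; lra|].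
  assert (Hprod : 0 <= (K - Q) * (4 * K * Q - 1)) by (apply Rmult_le_pos; nra).
  apply Rmult_le_reg_r with (Q * (2 * Q + 1) ^ 2); [nra|].
  field_simplify; [nra | lra | lra].
Qed.

Lemma ln_odd_le_4_ln K : 2 <= K -> ln (3 / 2) + ln (2 * K + 1) <= 4 * ln K.
Proof.
  intros HK.
  replace (4 * ln K) with (ln (K ^ 4)) by (rewrite ln_pow by lra; simpl INR; ring).
  rewrite <- ln_mult by lra.
  apply ln_le; [lra|].
  assert (HK3 : 8 <= K * (K * K)) by nra. simpl. nra.
Qed.

Lemma volume_log_bound (n s : nat) (K Q : R) : 2 <= K -> 1 <= Q <= K -> (1 <= s)%nat ->
  2 / 3 * (2 * K + 1) ^ n <= (2 * K + 1) ^ s * (2 * Q + 1) ^ n ->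
  INR n * ln (K / Q) <= 8 * INR s * ln K.
Proof.
  intros HK HQ Hs Hvol.
  apply ln_le in Hvol; [|apply Rmult_lt_0_compat; [lra | apply pow_lt; lra]].
  rewrite !ln_mult, !ln_pow in Hvol by (try apply pow_lt; lra).
  replace (ln (2 / 3)) with (- ln (3 / 2)) in Hvol
    by (rewrite <- ln_Rinv by lra; f_equal; field).
  rewrite ln_div by lra.
  pose proof (ln_div_le_ln_odd_ratio K Q HQ) as Hratio. rewrite !ln_div in Hratio by lra.
  pose proof (ln_odd_le_4_ln K HK) as Hodd.
  assert (H32 : 0 <= ln (3 / 2)) by (rewrite <- ln_1; apply ln_le; lra).
  assert (Hn : 0 <= INR n) by apply pos_INR.
  assert (Hs1 : 1 <= INR s) by (apply (le_INR 1); exact Hs).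
  assert (Hgap : INR n * (ln K - ln Q) <= 2 * INR n * (ln (2 * K + 1) - ln (2 * Q + 1)))
    by nra.
  assert (Hs32 : ln (3 / 2) <= INR s * ln (3 / 2)) by nra.
  assert (HsK : INR s * (ln (3 / 2) + ln (2 * K + 1)) <= INR s * (4 * ln K))
    by (apply Rmult_le_compat_l; lra).
  lra.
Qed.

Lemma zero_queries_radius n k r P : (1 <= n)%nat -> good_alg n k 0 r P -> (k <= r)%nat.
Proof.
  intros Hn [Hdist [_ Hsucc]]. apply is_distribution_sumR in Hdist as [Hpos Hsum].
  rewrite Forall_forall in Hpos.
  apply Nat.nlt_ge. intros Hrk.
  set (ytop := fun _ : nat => Z.of_nat k). set (ybot := fun _ : nat => (- Z.of_nat k)%Z).
  assert (Htop : success_prob n 0 r P ytop >= 2 / 3)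
    by (apply Hsucc; intros i _; unfold ytop; lia).
  assert (Hbot : success_prob n 0 r P ybot >= 2 / 3)
    by (apply Hsucc; intros i _; unfold ybot; lia).
  assert (Hdisjoint : forall o : vec,
             indicator (close n r o ytop) + indicator (close n r o ybot) <= 1).
  { intros o. unfold indicator, close.
    pose proof (linf_coord n o ytop 0 Hn) as Ht. pose proof (linf_coord n o ybot 0 Hn) as Hb.
    change (ytop 0%nat) with (Z.of_nat k) in Ht. change (ybot 0%nat) with (- Z.of_nat k)%Z in Hb.
    destruct (Z.leb_spec (linf n o ytop) (Z.of_nat r)), (Z.leb_spec (linf n o ybot) (Z.of_nat r));
      lra || lia. }
  rewrite success_prob_sumR in Htop, Hbot.
  assert (Hsum2 : sumR (fun p => fst p * indicator (close n r (run n 0 (snd p) ytop) ytop)) P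
                  + sumR (fun p => fst p * indicator (close n r (run n 0 (snd p) ybot) ybot)) P
                  <= sumR fst P).
  { rewrite <- sumR_plus. apply sumR_le. intros p Hp.
    specialize (Hdisjoint (run n 0 (snd p) ytop)). specialize (Hpos p Hp).
    unfold run in *. simpl history in *. nra. }
  lra.
Qed.

Lemma query_lower_bound n k r s P :
  (1 <= n)%nat -> (2 <= k)%nat -> (1 <= r)%nat -> (r <= k)%nat -> good_alg n k s r P ->
  INR n * ln (INR k / INR r) <= 8 * INR s * ln (INR k).
Proof.
  intros Hn Hk Hr Hrk Hgood.
  destruct s as [|s].
  - replace r with k by (pose proof (zero_queries_radius n k r P Hn Hgood); lia).
    rewrite Rdiv_diag, ln_1 by (apply not_0_INR; lia). simpl. lra.
  - apply volume_log_bound; [apply (le_INR 2); exact Hk | | lia |].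
    + split; [apply (le_INR 1) | apply le_INR]; lia.
    + exact (good_alg_volume n k (S s) r P Hgood).
Qed.

Lemma ln_div_ge_of_le_Rpower eps K Q : 1 < K -> 0 < Q -> Q <= Rpower K (1 - eps) ->
  eps * ln K <= ln (K / Q).
Proof.
  intros HK HQ HQK. rewrite ln_div by lra.
  apply ln_le in HQK; [|exact HQ]. rewrite ln_Rpower in HQK. lra.
Qed.

Theorem theorem8 :
  (exists c : R, 0 < c /\
    forall (n k Rad s : nat) (P : RandAlg),
      (1 <= n)%nat -> (2 <= k)%nat -> (1 <= Rad)%nat -> (Rad <= k)%nat ->
      good_alg n k s Rad P ->
      INR s >= c * (INR n * ln (INR k / INR Rad) / ln (INR k)))
  /\
  (forall eps : R, 0 < eps ->
    exists c : R, 0 < c /\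
    forall (n k Rad s : nat) (P : RandAlg),
      (1 <= n)%nat -> (2 <= k)%nat -> (1 <= Rad)%nat -> (Rad <= k)%nat ->
      INR Rad <= Rpower (INR k) (1 - eps) ->
      good_alg n k s Rad P ->
      INR s >= c * INR n).
Proof.
  assert (Hlnk : forall k, (2 <= k)%nat -> 0 < ln (INR k)).
  { intros k Hk. rewrite <- ln_1. apply ln_increasing; [lra|]. apply (lt_INR 1); lia. }
  split.
  - exists (1 / 8). split; [lra|].
    intros n k Rad s P Hn Hk HR HRk Hgood.
    pose proof (query_lower_bound n k Rad s P Hn Hk HR HRk Hgood) as Hbound.
    pose proof (Hlnk k Hk) as Hln.
    apply Rle_ge. unfold Rdiv. apply Rmult_le_reg_r with (ln (INR k)); [exact Hln|].
    field_simplify; lra.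
  - intros eps Heps. exists (eps / 8). split; [lra|].
    intros n k Rad s P Hn Hk HR HRk HRpow Hgood.
    pose proof (query_lower_bound n k Rad s P Hn Hk HR HRk Hgood) as Hbound.
    pose proof (Hlnk k Hk) as Hln.
    pose proof (ln_div_ge_of_le_Rpower eps (INR k) (INR Rad)) as Hratio.
    assert (Hnk : INR n * (eps * ln (INR k)) <= INR n * ln (INR k / INR Rad)).
    { apply Rmult_le_compat_l; [apply pos_INR|].
      apply Hratio; [apply (lt_INR 1); lia | apply (lt_INR 0); lia | exact HRpow]. }
    apply Rle_ge. apply Rmult_le_reg_r with (ln (INR k)); [exact Hln|]. nra.
Qed.
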